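(* Let $(G,\prec)$ be a POP-graph and let $v$ be an internal vertex of $G$ that is minimal, i.e. there is no internal vertex $v'\neq v$ with $v'\to v$. Then (1) $I(v)\subseteq I(G)$ and $I(v)$ is an interval of $(E(G),\prec)$; in particular $I(v)$ is an interval of $(I(G),\prec)$. (2) For every $h\in O(v)$ and $i\in I(G)\setminus I(v)$: $i\prec h$ iff $i\prec\min I(v)$, and $h\prec i$ iff $\max I(v)\prec i$.
   Context: A progressive graph is a finite directed acyclic graph (parallel edges allowed) in which every source and every sink has degree one; degree-one vertices are boundary vertices, the others internal. $I(G)$ is the set of input edges (edges whose initial vertex is a boundary vertex). For a vertex $v$, $I(v)$ and $O(v)$ are its incoming and outgoing edges. For edges write $e\to e'$ if $e\neq e'$ and there is a directed path whose first edge is $e$ and last edge is $e'$; for vertices $v'\to v$ means there is a directed path from $v'$ to $v$. A planar order on $G$ is a linear order $\prec$ on $E(G)$ such that (P1) $e_1\to e_2$ implies $e_1\prec e_2$; (P2) if $e_1\prec e_2\prec e_3$ and $e_1\to e_3$ then $e_1\to e_2$ or $e_2\to e_3$. A POP-graph is a progressive graph with a planar order. An interval of a linearly ordered set $(S,\prec)$ is a subset of the form $\{s: a\preceq s\preceq b\}$. *)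

From mathcomp Require Import all_boot.
Set Implicit Arguments. Unset Strict Implicit. Unset Printing Implicit Defensive.

(* A finite directed graph with parallel edges: vertex type V, edge type E,
   each edge e goes from [src e] to [tgt e]. *)
Section POP.
Variables (V E : finType) (src tgt : E -> V).

Definition In_v (v : V) : {set E} := [set e | tgt e == v].
Definition Out_v (v : V) : {set E} := [set e | src e == v].
Definition deg (v : V) : nat := #|In_v v| + #|Out_v v|.

Definition boundary (v : V) : bool := deg v == 1.
Definition internal (v : V) : bool := ~~ boundary v.

Definition vadj : rel V := fun x y => [exists e, (src e == x) && (tgt e == y)].
Definition eadj : rel E := fun e e' => tgt e == src e'.

Definition vreach (x y : V) : bool := connect vadj x y.
Definition ereach (e e' : E) : bool := (e != e') && connect eadj e e'.

Definition acyclic : Prop := forall x y, vadj x y -> ~~ connect vadj y x.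

Definition progressive : Prop :=
  acyclic /\
  (forall v, In_v v = set0 -> deg v = 1) /\
  (forall v, Out_v v = set0 -> deg v = 1).

Definition input_edges : {set E} := [set e | boundary (src e)].

Definition strict_linear (lt : rel E) : Prop :=
  irreflexive lt /\ transitive lt /\ (forall x y, x != y -> lt x y || lt y x).

Definition leo (lt : rel E) (x y : E) : bool := (x == y) || lt x y.

Definition planar_order (lt : rel E) : Prop :=
  strict_linear lt /\
  (forall e1 e2, ereach e1 e2 -> lt e1 e2) /\
  (forall e1 e2 e3, lt e1 e2 -> lt e2 e3 -> ereach e1 e3 ->
      ereach e1 e2 || ereach e2 e3).

Definition is_interval (lt : rel E) (S A : {set E}) : Prop :=
  exists a b, [/\ a \in S, b \in S &
    A = [set s in S | leo lt a s && leo lt s b]].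

Definition is_min (lt : rel E) (A : {set E}) (a : E) : Prop :=
  a \in A /\ forall x, x \in A -> leo lt a x.
Definition is_max (lt : rel E) (A : {set E}) (b : E) : Prop :=
  b \in A /\ forall x, x \in A -> leo lt x b.

End POP.

From mathcomp Require Import all_boot.
Set Implicit Arguments.
Unset Strict Implicit.

(* An edge reached from another edge starts at an internal vertex, so no edge
   reaches an input edge.  For a minimal internal vertex v this makes every edge
   of I(v) an input edge, and then every edge reaching an edge h of O(v) lies in
   I(v).  Take a in I(v) and e with a < e < h: since a reaches h, (P2) says that
   a reaches e or e reaches h.  If e lies between min I(v) and max I(v), the
   first option makes max I(v) reach e too, contradicting e < max I(v), and the
   second puts e in I(v); if e is an input edge outside I(v), neither option is
   possible. *)

Lemma connect_last (T : finType) (r : rel T) x y :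
  connect r x y -> x != y -> exists2 z, connect r x z & r z y.
Proof.
move=> /connectP [p pth ->]; case/lastP: p pth => [|p z]; first by rewrite eqxx.
rewrite rcons_path last_rcons => /andP [pth rz] _.
by exists (last x p) => //; apply/connectP; exists p.
Qed.

Lemma connect_first (T : finType) (r : rel T) x y :
  connect r x y -> x != y -> exists2 z, r x z & connect r z y.
Proof.
move=> /connectP [[|z p] /= pth ->]; first by rewrite eqxx.
by case/andP: pth => rz pth _; exists z => //; apply/connectP; exists p.
Qed.

Section Reachability.
Variables (V E : finType) (src tgt : E -> V).

Lemma internal_of_in_out v c h :
  c \in In_v tgt v -> h \in Out_v src v -> internal src tgt v.
Proof.
move=> cin hout; rewrite /internal /boundary /deg.
have : 0 < #|In_v tgt v| by apply/card_gt0P; exists c.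
have : 0 < #|Out_v src v| by apply/card_gt0P; exists h.
by case: #|In_v tgt v| => [|n]; case: #|Out_v src v| => [|m] //; rewrite addSn addnS.
Qed.

Lemma ereach_internal_src x y : ereach src tgt x y -> internal src tgt (src y).
Proof.
case/andP=> neq /connect_last /(_ neq) [z _ zy].
by apply: (@internal_of_in_out _ z y); rewrite inE //; apply/eqP.
Qed.

Lemma input_edges_unreachable x i :
  i \in input_edges src tgt -> ~~ ereach src tgt x i.
Proof.
rewrite inE => bi; apply/negP => /ereach_internal_src.
by rewrite /internal bi.
Qed.

Lemma ereach_in_out (acyc : acyclic src tgt) v c h :
  c \in In_v tgt v -> h \in Out_v src v -> ereach src tgt c h.
Proof.
rewrite !inE => /eqP tc /eqP sh; rewrite /ereach (connect1 (_ : eadj _ _ _ _)).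
  rewrite andbT; apply/eqP => ch; subst h.
  have vv : vadj src tgt v v by apply/existsP; exists c; rewrite sh tc eqxx.
  by move: (acyc _ _ vv); rewrite connect0.
by rewrite /eadj tc sh.
Qed.

Lemma ereach_in_same_vertex v c c' x :
  c \in In_v tgt v -> c' \in In_v tgt v ->
  ereach src tgt c x -> c' != x -> ereach src tgt c' x.
Proof.
rewrite !inE => /eqP tc /eqP tc' /andP [neq /connect_first /(_ neq) [z cz zx]] neq'.
by rewrite /ereach neq' (connect_trans (connect1 _) zx) // /eadj tc' -tc.
Qed.

Section InputInVertex.
Variable v : V.
Hypothesis in_input : In_v tgt v \subset input_edges src tgt.

Lemma ereach_out_from_in x h :
  h \in Out_v src v -> ereach src tgt x h -> x \in In_v tgt v.
Proof.
move=> hout /andP [neq /connect_last /(_ neq) [z xz zh]].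
have zin : z \in In_v tgt v by move: hout zh; rewrite !inE /eadj => /eqP <-.
case: (eqVneq x z) => [-> // | xz'].
have /input_edges_unreachable : z \in input_edges src tgt by apply: subsetP zin.
by move=> /(_ x); rewrite /ereach xz' xz.
Qed.

End InputInVertex.

Lemma minimal_in_input (acyc : acyclic src tgt) v :
  (forall v', internal src tgt v' -> v' != v -> ~~ vreach src tgt v' v) ->
  In_v tgt v \subset input_edges src tgt.
Proof.
move=> vmin; apply/subsetP => c cin; rewrite inE; apply/negPn/negP => cint.
have cv : vadj src tgt (src c) v.
  by apply/existsP; exists c; rewrite inE in cin; rewrite eqxx cin.
have cv_neq : src c != v.
  by apply/eqP => cv_eq; move: (acyc _ _ cv); rewrite cv_eq connect0.
by move: (vmin _ cint cv_neq); rewrite /vreach (connect1 cv).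
Qed.

End Reachability.

Section LinearOrder.
Variables (E : finType) (lt : rel E).
Hypothesis lt_linear : strict_linear lt.

Lemma lt_asym x y : lt x y -> lt y x -> False.
Proof.
case: lt_linear => irr [trans _] xy yx.
by move: (irr x); rewrite (trans _ _ _ xy yx).
Qed.

Lemma lt_total x y : x != y -> ~~ lt x y -> lt y x.
Proof. by case: lt_linear => _ [_ tot] /tot /orP [-> | ->]. Qed.

Lemma exists_is_min (A : {set E}) x0 : x0 \in A -> exists a, is_min lt A a.
Proof.
case: lt_linear => _ [trans tot] x0A.
have leo_trans : transitive (leo lt).
  move=> y x z /orP [/eqP -> // | xy] /orP [/eqP <- | yz]; first by rewrite /leo xy orbT.
  by rewrite /leo (trans _ _ _ xy yz) orbT.
have leo_total : total (leo lt).
  by move=> x y; rewrite /leo; case: eqVneq => [// | /tot /orP [] ->]; rewrite !orbT.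
have sorted_A := sort_sorted leo_total (enum A).
have memA x : (x \in sort (leo lt) (enum A)) = (x \in A).
  by rewrite mem_sort mem_enum.
case: (sort _ _) memA sorted_A => [|a s] memA sorted_A.
  by move: (memA x0); rewrite x0A.
exists a; split; first by rewrite -memA mem_head.
move=> x; rewrite -memA inE => /orP [/eqP -> | xs]; first by rewrite /leo eqxx.
exact: allP (order_path_min leo_trans sorted_A) x xs.
Qed.

End LinearOrder.

Lemma exists_is_max (E : finType) (lt : rel E) (A : {set E}) x0 :
  strict_linear lt -> x0 \in A -> exists b, is_max lt A b.
Proof.
case=> irr [trans tot] x0A.
have rev_linear : strict_linear (fun x y => lt y x).
  by split; [exact: irr | split=> [y x z xy yz | x y /tot]; [apply: trans yz xy | rewrite orbC]].
have [b [bA bmin]] := exists_is_min rev_linear x0A.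
by exists b; split=> // x /bmin; rewrite /leo eq_sym.
Qed.

Lemma is_interval_of_convex (E : finType) (lt : rel E) (S A : {set E}) a b :
  A \subset S -> is_min lt A a -> is_max lt A b ->
  (forall e, leo lt a e -> leo lt e b -> e \in A) -> is_interval lt S A.
Proof.
move=> AS [aA amin] [bA bmax] convex.
exists a, b; split; [exact: subsetP aA | exact: subsetP bA |].
apply/setP => e; rewrite inE; apply/idP/idP => [eA | /andP [_ /andP []]].
  by rewrite (subsetP AS) // amin // bmax.
exact: convex.
Qed.

Section PlanarInVertex.
Variables (V E : finType) (src tgt : E -> V) (lt : rel E).
Hypotheses (acyc : acyclic src tgt) (planar : planar_order src tgt lt).
Variable v : V.
Hypothesis in_input : In_v tgt v \subset input_edges src tgt.

Let lt_linear : strict_linear lt := planar.1.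
Let lt_trans : transitive lt := lt_linear.2.1.
Let ereach_lt e1 e2 : ereach src tgt e1 e2 -> lt e1 e2 := planar.2.1 e1 e2.
Let planar_P2 e1 e2 e3 : lt e1 e2 -> lt e2 e3 -> ereach src tgt e1 e3 ->
  ereach src tgt e1 e2 || ereach src tgt e2 e3 := planar.2.2 e1 e2 e3.

Lemma in_vertex_convex a b h e :
  is_min lt (In_v tgt v) a -> is_max lt (In_v tgt v) b -> h \in Out_v src v ->
  leo lt a e -> leo lt e b -> e \in In_v tgt v.
Proof.
move=> [aA _] [bA _] hout.
case/orP => [/eqP <- // | ae]; case/orP => [/eqP -> // | eb].
have eh : lt e h := lt_trans eb (ereach_lt (ereach_in_out acyc bA hout)).
case/orP: (planar_P2 ae eh (ereach_in_out acyc aA hout)) => [are | reh].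
  have be_neq : b != e by apply: contraTneq eb => <-; rewrite lt_linear.1.
  have /ereach_lt be := ereach_in_same_vertex aA bA are be_neq.
  by case: (lt_asym lt_linear eb be).
exact: (ereach_out_from_in in_input hout reh).
Qed.

Lemma input_not_between c h i :
  c \in In_v tgt v -> h \in Out_v src v ->
  i \in input_edges src tgt :\: In_v tgt v -> lt c i -> lt i h -> False.
Proof.
move=> cin hout /setDP [iinput inotin] ci ih.
case/orP: (planar_P2 ci ih (ereach_in_out acyc cin hout)) => [rci | rih].
  by move: (input_edges_unreachable c iinput); rewrite rci.
by move: (ereach_out_from_in in_input hout rih); rewrite (negbTE inotin).
Qed.

Section OutsideInputs.
Variables (a b h i : E).
Hypotheses (amin : is_min lt (In_v tgt v) a) (bmax : is_max lt (In_v tgt v) b).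
Hypotheses (hout : h \in Out_v src v) (iout : i \in input_edges src tgt :\: In_v tgt v).

Let ah : lt a h := ereach_lt (ereach_in_out acyc amin.1 hout).

Let i_neq_in c : c \in In_v tgt v -> i != c.
Proof. by move=> cin; apply: contraTneq iout => ->; rewrite inE cin. Qed.

Lemma input_lt_out_iff : lt i h <-> lt i a.
Proof.
split=> [ih | ia]; last exact: lt_trans ia ah.
apply/negPn/negP => /(lt_total lt_linear (i_neq_in amin.1)) ai.
exact: input_not_between amin.1 hout iout ai ih.
Qed.

Lemma out_lt_input_iff : lt h i <-> lt b i.
Proof.
have hi_neq : h != i.
  have /eqP hv : src h == v by move: hout; rewrite inE.
  have vint := internal_of_in_out amin.1 hout.
  by apply: contraTneq iout => <-; rewrite !inE hv (negbTE vint) andbF.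
split=> [hi | bi]; apply/negPn/negP.
- have bi_neq : b != i by rewrite eq_sym i_neq_in // bmax.1.
  move=> /(lt_total lt_linear bi_neq) ib.
  have inotin : i \notin In_v tgt v by case/setDP: iout.
  case: (boolP (lt i a)) => [ia | /(lt_total lt_linear (i_neq_in amin.1)) ai].
    exact: (lt_asym lt_linear hi (lt_trans ia ah)).
  by move: inotin; rewrite (in_vertex_convex amin bmax hout (e := i)) // /leo ?ai ?ib orbT.
- move=> /(lt_total lt_linear hi_neq) ih.
  exact: input_not_between bmax.1 hout iout bi ih.
Qed.

End OutsideInputs.

End PlanarInVertex.

Theorem lemma3p5 (V E : finType) (src tgt : E -> V) (lt : rel E)
  (Hprog : progressive src tgt) (Hplan : planar_order src tgt lt)
  (v : V) (Hv : internal src tgt v)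
  (Hmin : forall v', internal src tgt v' -> v' != v -> ~~ vreach src tgt v' v) :
  (In_v tgt v \subset input_edges src tgt /\
   is_interval lt [set: E] (In_v tgt v) /\
   is_interval lt (input_edges src tgt) (In_v tgt v)) /\
  (forall a b, is_min lt (In_v tgt v) a -> is_max lt (In_v tgt v) b ->
   forall h i, h \in Out_v src v ->
     i \in input_edges src tgt :\: In_v tgt v ->
     (lt i h <-> lt i a) /\ (lt h i <-> lt b i)).
Proof.
case: Hprog => acyc [no_in_deg1 no_out_deg1].
have in_input := minimal_in_input acyc Hmin.
have [c0 c0in] : exists c, c \in In_v tgt v.
  case: (set_0Vmem (In_v tgt v)) => [/no_in_deg1 deg1 | [e ein]]; last by exists e.
  by move: Hv; rewrite /internal /boundary deg1.
have [h0 h0out] : exists h, h \in Out_v src v.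
  case: (set_0Vmem (Out_v src v)) => [/no_out_deg1 deg1 | [e ein]]; last by exists e.
  by move: Hv; rewrite /internal /boundary deg1.
have [a0 a0min] := exists_is_min Hplan.1 c0in.
have [b0 b0max] := exists_is_max Hplan.1 c0in.
have convex e : leo lt a0 e -> leo lt e b0 -> e \in In_v tgt v.
  exact: (in_vertex_convex acyc Hplan in_input a0min b0max h0out).
split.
  split=> //; split; apply: is_interval_of_convex _ a0min b0max convex => //.
move=> a b amin bmax h i hout iout; split.
  exact: (input_lt_out_iff acyc Hplan in_input amin hout iout).
exact: (out_lt_input_iff acyc Hplan in_input amin bmax hout iout).
Qed.
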